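(* Let $P\in\mathbb{C}[y]$ with $\deg P\geq 2$, let $\delta\in\mathbb{C}\setminus\{0\}$, and let $h_1:\mathbb{C}^2\to\mathbb{C}^2$ be the generalized Hénon map $h_1(x,y)=(y,P(y)-\delta x)$. Let $\theta\in(0,2\pi)\setminus\{\frac{\pi}{2},\pi,\frac{3\pi}{2}\}$, let $R_\theta:\mathbb{C}^2\to\mathbb{C}^2$ be the linear map with matrix $\begin{pmatrix}\cos\theta&-\sin\theta\\ \sin\theta&\cos\theta\end{pmatrix}$, let $h_2=R_\theta^{-1}\circ h_1\circ R_\theta$, and let $G=\langle h_1,h_2\rangle$ be the group of holomorphic automorphisms of $\mathbb{C}^2$ generated by $h_1,h_2$. Then there is a nonempty unbounded open set $U\subset\mathcal{F}(G)$ such that for every $(x,y)\in U$ and every sequence $\omega=(\omega_n)_{n\in\mathbb{N}}\in\{h_1,h_2,h_1^{-1},h_2^{-1}\}^{\mathbb{N}}$ for which the reduced word length of $S_k(\omega):=\omega_k\circ\omega_{k-1}\circ\cdots\circ\omega_1$ tends to $\infty$ as $k\to\infty$, we have $\|S_k(\omega)(x,y)\|\to\infty$ as $k\to\infty$.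
   Context: A family $\mathcal{A}$ of holomorphic maps $X\to Y$ is normal if every sequence in $\mathcal{A}$ has a subsequence that either converges uniformly on compact subsets or diverges properly (locally uniformly) to infinity. The Fatou set $\mathcal{F}(G)\subset\mathbb{C}^2$ of $G$ is the largest open subset of $\mathbb{C}^2$ on which the family $G$ (viewed as maps $\mathbb{C}^2\to\mathbb{C}^2$) is normal. The length of $S_k(\omega)$ is its length as a reduced word in the letters $h_1^{\pm1},h_2^{\pm1}$ (after cancelling adjacent inverse pairs). *)

From HB Require Import structures.
From mathcomp Require Import all_boot all_order all_algebra.
From mathcomp Require Import all_classical all_reals all_analysis.
From mathcomp.real_closed Require Import complex.
Set Implicit Arguments. Unset Strict Implicit. Unset Printing Implicit Defensive.
Import Order.TTheory GRing.Theory Num.Theory.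
Import numFieldNormedType.Exports.
Local Open Scope ring_scope.
Local Open Scope classical_set_scope.

(* The complex numbers C = R[i] over a real field R, viewed as a
   numClosedFieldType so that MathComp-Analysis equips it with its usual
   (normed, metric) topology. *)
Definition CC (R : realType) : numClosedFieldType := R[i].

Definition C2 (R : realType) := (CC R * CC R)%type.

(* A norm on C^2 (the max norm; all norms on C^2 are equivalent). *)
Definition norm2 {R : realType} (z : C2 R) : R :=
  Num.max (ComplexField.Normc.normc (z.1 : R[i])) (ComplexField.Normc.normc (z.2 : R[i])).

Definition dist2 {R : realType} (z w : C2 R) : R :=
  norm2 ((z.1 - w.1, z.2 - w.2) : C2 R).

Definition henon {R : realType} (P : {poly CC R}) (d : CC R) (z : C2 R) : C2 R :=
  (z.2, P.[z.2] - d * z.1).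
Definition henon_inv {R : realType} (P : {poly CC R}) (d : CC R) (z : C2 R) : C2 R :=
  ((P.[z.1] - z.2) / d, z.1).

Definition rot {R : realType} (t : R) (z : C2 R) : C2 R :=
  let c : CC R := ((cos t)%:C)%C in let s : CC R := ((sin t)%:C)%C in
  (c * z.1 - s * z.2, s * z.1 + c * z.2).
Definition rot_inv {R : realType} (t : R) (z : C2 R) : C2 R :=
  let c : CC R := ((cos t)%:C)%C in let s : CC R := ((sin t)%:C)%C in
  (c * z.1 + s * z.2, - s * z.1 + c * z.2).

Definition h2 {R : realType} P d (t : R) : C2 R -> C2 R :=
  rot_inv t \o henon P d \o rot t.
Definition h2_inv {R : realType} P d (t : R) : C2 R -> C2 R :=
  rot_inv t \o henon_inv P d \o rot t.

(* Letters h1^{+-1}, h2^{+-1}: (false, _) is h1, (true, _) is h2;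
   (_, false) is the map itself, (_, true) its inverse. *)
Definition letter := (bool * bool)%type.
Definition linv (l : letter) : letter := (l.1, ~~ l.2).

Definition eval_letter {R : realType} P d (t : R) (l : letter) : C2 R -> C2 R :=
  match l with
  | (false, false) => henon P d
  | (false, true) => henon_inv P d
  | (true, false) => h2 P d t
  | (true, true) => h2_inv P d t
  end.

Definition eval_word {R : realType} P d (t : R) (w : seq letter) : C2 R -> C2 R :=
  foldr (fun l f => eval_letter P d t l \o f) id w.

Definition push (l : letter) (w : seq letter) : seq letter :=
  if w is l' :: w' then (if l' == linv l then w' else l :: w) else [:: l].
Definition reduce (w : seq letter) : seq letter := foldr push [::] w.
Definition reduced_length (w : seq letter) : nat := size (reduce w).

Definition Ggroup {R : realType} P d (t : R) : set (C2 R -> C2 R) :=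
  [set f | exists w : seq letter, f = eval_word P d t w].

(* omega : nat -> letter, with omega n = omega_{n+1};
   word of S_k(omega) = omega_k o ... o omega_1 is [:: omega_k; ...; omega_1] *)
Definition Sword (om : nat -> letter) (k : nat) : seq letter := rev (mkseq om k).
Definition Smap {R : realType} P d (t : R) (om : nat -> letter) (k : nat) : C2 R -> C2 R :=
  eval_word P d t (Sword om k).

Definition normal_on {R : realType} (F : set (C2 R -> C2 R)) (V : set (C2 R)) : Prop :=
  forall f : nat -> (C2 R -> C2 R), (forall n, F (f n)) ->
  exists phi : nat -> nat, (forall n, (phi n < phi n.+1)%N) /\
   ((exists g : C2 R -> C2 R, forall K : set (C2 R), compact K -> K `<=` V ->
       forall e : R, 0 < e -> exists N : nat, forall n, (N <= n)%N ->
         forall z, K z -> dist2 (f (phi n) z) (g z) < e)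
    \/
    (forall K : set (C2 R), compact K -> K `<=` V ->
       forall M : R, exists N : nat, forall n, (N <= n)%N ->
         forall z, K z -> M < norm2 (f (phi n) z))).

(* Fatou set: the largest open set on which F is normal, i.e. the union of
   all open sets on which F is normal. *)
Definition fatou_set {R : realType} (F : set (C2 R -> C2 R)) : set (C2 R) :=
  [set z | exists V : set (C2 R), [/\ open V, V z & normal_on F V]].

Definition unbounded2 {R : realType} (U : set (C2 R)) : Prop :=
  forall M : R, exists z, U z /\ M < norm2 z.

From Pilot Require Import Defs.
From HB Require Import structures.
From mathcomp Require Import all_boot all_order all_algebra.
From mathcomp Require Import all_classical all_reals all_analysis.
From mathcomp.real_closed Require Import complex.
From mathcomp Require Import ring lra zify.
Import Order.TTheory GRing.Theory Num.Theory.
Import numFieldNormedType.Exports.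
Import ComplexField.Normc.
Local Open Scope ring_scope.
Local Open Scope classical_set_scope.

(* Ping-pong.  Read each letter in the coordinates adapted to its generator
   (the identity for h1, R_theta for h2): there h1 expands y and h1^-1
   expands x on the cone where that coordinate dominates, by a factor as
   large as we like once it is large, because deg P >= 2.  All four entries
   of R_theta have modulus >= kappa = min(|cos theta|, |sin theta|) > 0, so a
   point deep in an expanding cone of one generator is, in the coordinates
   of the other, in the domain cone of both of its letters; a letter followed
   by itself stays in its cone.  Hence along a reduced word every letter at
   least doubles the max norm.  The complex line y = i x is invariant under
   every rotation and |x| = |y| on it, so the points near it and far out lie
   in the domain cones of all four letters: on this open unbounded set
   ||w(z)|| >= 2^|w| for every reduced word w.  This gives escape along words
   of growing reduced length, and normality, since words of bounded reduced
   length give only finitely many maps. *)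

Section ComplexModulus.
Local Open Scope complex_scope.
Context {R : realType}.
Implicit Types a b : CC R.

Lemma normcE_norm a : `|a| = (normc a)%:C.
Proof. by case: a => x y; rewrite normc_def. Qed.

Lemma normc_ge0 a : 0 <= normc a.
Proof. by rewrite -ler0c -normcE_norm normr_ge0. Qed.

Lemma normc_eq0 a : (normc a == 0) = (a == 0).
Proof.
apply/eqP/eqP => [/eq0_normc //|->].
exact: normc0.
Qed.

Lemma normc_gt0 a : (0 < normc a) = (a != 0).
Proof. by rewrite lt_def normc_eq0 normc_ge0 andbT. Qed.

Lemma lerB_normc a b : normc a - normc b <= normc (a - b).
Proof. have := le_normcD (a - b) b; rewrite subrK; lra. Qed.

Lemma ler_normcB a b : normc (a - b) <= normc a + normc b.
Proof. by have := le_normcD a (- b); rewrite normcN. Qed.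

Lemma normc_real (r : R) : normc (r%:C : CC R) = `|r|.
Proof. by rewrite /normc /= expr0n /= addr0 sqrtr_sqr. Qed.

Lemma normc_i : normc ('i : CC R) = 1.
Proof. by rewrite /normc /= expr0n /= add0r expr1n sqrtr1. Qed.

Lemma normc_unit_circle (c s : R) : c ^+ 2 + s ^+ 2 = 1 ->
  normc ((c%:C + s%:C * 'i) : CC R) = 1.
Proof.
move=> cs; rewrite /normc /=.
by rewrite !(mul0r, mulr0, mulr1, subr0, add0r, addr0) cs sqrtr1.
Qed.

Lemma normc_lin_le a b (x y : CC R) : normc a <= 1 -> normc b <= 1 ->
  normc (a * x + b * y) <= normc x + normc y.
Proof.
move=> a1 b1; have := le_normcD (a * x) (b * y); rewrite !normcM.
have := normc_ge0 x; have := normc_ge0 y; have := normc_ge0 a; have := normc_ge0 b.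
nra.
Qed.

Lemma normc_unit_perturb u v (x rho : CC R) : normc u = 1 -> normc v <= 1 ->
  normc x - normc rho <= normc (u * x + v * rho) <= normc x + normc rho.
Proof.
move=> u1 v1; have := normc_ge0 rho; have := normc_ge0 v.
have := le_normcD (u * x) (v * rho); have := lerB_normc (u * x) (- (v * rho)).
rewrite opprK normcN !normcM u1 !mul1r => lo hi v0 rho0.
by apply/andP; split; nra.
Qed.

End ComplexModulus.

Section PolynomialGrowth.
Context {R : realType}.

Lemma horner_normc_ge_pow (p : {poly CC R}) : p != 0 ->
  exists c r : R, [/\ 0 < c, 1 <= r &
    forall y, r <= normc y -> c * normc y ^+ (size p).-1 <= normc p.[y]].
Proof.
elim/poly_ind: p => [|q a IH]; first by rewrite eqxx.
have [-> nz|qnz nz] := eqVneq q 0.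
  rewrite mul0r add0r in nz *; rewrite size_polyC.
  have a0 : a != 0 by apply: contraNneq nz => ->.
  exists (normc a), 1; split; rewrite ?normc_gt0 // => y _.
  by rewrite a0 expr0 mulr1 hornerC.
have [c [r [c0 r1 lb]]] := IH qnz.
rewrite size_MXaddC (negbTE qnz) /=.
have sq : size q = (size q).-1.+1 by rewrite prednK // size_poly_gt0.
exists (c / 2), (Num.max r (2 * normc a / c + 1)); split.
- by rewrite divr_gt0.
- by rewrite le_max r1.
move=> y; rewrite ge_max hornerMXaddC => /andP[ry ay].
have := lerB_normc (q.[y] * y) (- a); rewrite opprK normcN normcM.
have lbq := lb y ry; rewrite sq exprS.
set Y := normc y in ry ay lbq *; set Yn := Y ^+ _ in lbq *.
have Y1 : 1 <= Y by apply: le_trans ry.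
have Yn1 : 1 <= Yn by rewrite exprn_ege1.
have a0 := normc_ge0 a.
have ca : 2 * normc a <= c * Y.
  move: ay; rewrite -lerBrDr ler_pdivrMr // => ay.
  have : c * (Y - 1) <= c * Y by rewrite ler_pM2l //; lra.
  lra.
have : c * Yn * Y <= normc q.[y] * Y by rewrite ler_pM2r //; lra.
have : c * Y <= c * (Y * Yn) by rewrite ler_pM2l // ler_peMr //; lra.
nra.
Qed.

Lemma horner_normc_superlinear (p : {poly CC R}) : (2 < size p)%N ->
  forall K : R, exists r : R,
    1 <= r /\ forall y, r <= normc y -> K * normc y <= normc p.[y].
Proof.
move=> sp K.
have [c [r [c0 r1 lb]]] : exists c r : R, [/\ 0 < c, 1 <= r & forall y, r <= normc y ->
    c * normc y ^+ (size p).-1 <= normc p.[y]].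
  by apply: horner_normc_ge_pow; rewrite -size_poly_gt0 (ltn_trans _ sp).
exists (Num.max r (`|K| / c)); split; first by rewrite le_max r1.
move=> y; rewrite ge_max => /andP[ry Ky].
have := lb y ry.
have -> : (size p).-1 = ((size p).-1 - 2).+2 by move: sp; clear; lia.
rewrite !exprS mulrA.
set Y := normc y in ry Ky *; set Yn := Y ^+ _.
have Y1 : 1 <= Y by apply: le_trans ry.
have Yn1 : 1 <= Yn by rewrite exprn_ege1.
have cK : `|K| <= c * Y by rewrite mulrC -ler_pdivrMr.
have := ler_norm K.
have : c * Y * Y <= c * Y * Y * Yn by rewrite ler_peMr // !mulr_ge0 //; lra.
nra.
Qed.

End PolynomialGrowth.

Section MaxNorm.
Context {R : realType}.
Implicit Types z : C2 R.

Lemma normc_fst_le_norm2 z : normc z.1 <= norm2 z.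
Proof. by rewrite /norm2 le_max lexx. Qed.

Lemma normc_snd_le_norm2 z : normc z.2 <= norm2 z.
Proof. by rewrite /norm2 le_max lexx orbT. Qed.

Lemma norm2_le z (a : R) : normc z.1 <= a -> normc z.2 <= a -> norm2 z <= a.
Proof. by move=> h1 h2; rewrite /norm2 ge_max h1 h2. Qed.

Lemma norm2_ge0 z : 0 <= norm2 z.
Proof. exact: le_trans (normc_ge0 _) (normc_fst_le_norm2 z). Qed.

Definition major (e : bool) z := if e then z.1 else z.2.
Definition minor (e : bool) z := if e then z.2 else z.1.

Lemma normc_major_le_norm2 e z : normc (major e z) <= norm2 z.
Proof. by case: e; [exact: normc_fst_le_norm2 | exact: normc_snd_le_norm2]. Qed.

Lemma norm2_le_major e z :
  normc (minor e z) <= normc (major e z) -> norm2 z <= normc (major e z).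
Proof. by case: e => /= h; apply: norm2_le. Qed.

End MaxNorm.

Lemma normc_dominant_combination {R : realType} (k : R) (a b p q : CC R) :
  0 < k -> k <= normc a <= 1 -> normc b <= 1 -> 16 * normc q <= k * normc p ->
  k / 2 * normc p <= normc (a * p + b * q) <= 2 * normc p.
Proof.
move=> k0 /andP[ka a1] b1 qp.
have := normc_ge0 p; have := normc_ge0 q; have := normc_ge0 b.
move=> b0 q0 p0; apply/andP; split.
  have := lerB_normc (a * p) (- (b * q)); rewrite opprK normcN !normcM.
  nra.
have := normc_lin_le _ _ p q a1 b1; nra.
Qed.

Lemma normc_comb_major {R : realType} (k : R) e (w : C2 R) (a b : CC R) :
  0 < k -> k <= normc a <= 1 -> k <= normc b <= 1 ->
  16 * normc (minor e w) <= k * normc (major e w) ->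
  k / 2 * normc (major e w) <= normc (a * w.1 + b * w.2) <= 2 * normc (major e w).
Proof.
move=> k0 ab /andP[kb b1]; case: e => /= minor_small.
  exact: normc_dominant_combination k0 ab b1 minor_small.
rewrite addrC; apply: normc_dominant_combination k0 _ _ minor_small.
  by rewrite kb b1.
by case/andP: ab.
Qed.

Section Generators.
Local Open Scope complex_scope.
Context {R : realType} (P : {poly CC R}) (d : CC R) (t : R).

Lemma cos2Dsin2C : ((cos t)%:C ^+ 2 + (sin t)%:C ^+ 2 : CC R) = 1.
Proof. by rewrite -!rmorphXn -rmorphD cos2Dsin2. Qed.

Lemma rot_inv_rot : cancel (Defs.rot t) (rot_inv t).
Proof.
have cs := cos2Dsin2C.
by case=> x y; rewrite /Defs.rot /rot_inv /=; congr pair; rewrite -[RHS]mul1r -cs; ring.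
Qed.

Lemma rot_rot_inv : cancel (rot_inv t) (Defs.rot t).
Proof.
have cs := cos2Dsin2C.
by case=> x y; rewrite /Defs.rot /rot_inv /=; congr pair; rewrite -[RHS]mul1r -cs; ring.
Qed.

Hypothesis d0 : d != 0.

Lemma henonK : cancel (henon P d) (henon_inv P d).
Proof. by case=> x y; rewrite /henon /henon_inv /= opprB addrC subrK mulrC mulKf. Qed.

Lemma henon_invK : cancel (henon_inv P d) (henon P d).
Proof.
by case=> x y; rewrite /henon /henon_inv /= mulrC divfK // opprB addrC subrK.
Qed.

Lemma eval_letterK l : cancel (eval_letter P d t (linv l)) (eval_letter P d t l).
Proof.
case: l => [[] []] z /=; rewrite /h2 /h2_inv /=;
  by rewrite ?rot_rot_inv ?henonK ?henon_invK ?rot_inv_rot.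
Qed.

Lemma eval_push l w :
  eval_word P d t (push l w) =1 eval_letter P d t l \o eval_word P d t w.
Proof. by case: w => [|l' w] //= z; case: eqP => [->|] //=; rewrite eval_letterK. Qed.

Lemma eval_reduce w : eval_word P d t (reduce w) =1 eval_word P d t w.
Proof. by elim: w => [|l w IH] //= z; rewrite eval_push /= IH. Qed.

End Generators.

Definition cancel_free : rel letter := fun l l' => l' != linv l.

Lemma sorted_push l w : sorted cancel_free w -> sorted cancel_free (push l w).
Proof.
case: w => [|l' w] //= hw; case: eqP => [_|/eqP ne] /=; first exact: path_sorted hw.
by rewrite {1}/cancel_free ne.
Qed.

Lemma sorted_reduce w : sorted cancel_free (reduce w).
Proof. by elim: w => [|l w IH] //=; apply: sorted_push. Qed.

Lemma cancel_free_same_generator l l' : cancel_free l l' -> l.1 = l'.1 -> l = l'.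
Proof. by case: l l' => [a e] [a' e'] /=; case: a; case: a'; case: e; case: e'. Qed.

Fixpoint words_upto (T : finType) (n : nat) : seq (seq T) :=
  if n is n'.+1 then [::] :: [seq x :: w | x <- enum T, w <- words_upto T n']
  else [:: [::]].

Lemma mem_words_upto {T : finType} {n : nat} {w : seq T} :
  (size w <= n)%N -> w \in words_upto T n.
Proof.
elim: n w => [|n IH] [|x w] //= wn.
by rewrite inE allpairs_f ?orbT ?mem_enum ?IH.
Qed.

Lemma recurrent_value {T : eqType} {s : seq T} {u : nat -> T} : (forall n, u n \in s) ->
  exists v, forall N, exists n, (N <= n)%N /\ u n = v.
Proof.
elim: s u => [|a s IH] u us; first by have := us 0%N.
have [recur|] := EM (forall N, exists n, (N <= n)%N /\ u n = a); first by exists a.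
move=> /existsNP[N0 /forallNP notA].
have us' n : u (n + N0)%N \in s.
  have := us (n + N0)%N; rewrite inE => /orP[/eqP ua|//].
  by case: (notA (n + N0)%N); rewrite leq_addl.
have [v vP] := IH _ us'; exists v => N.
have [n [Nn <-]] := vP N.
by exists (n + N0)%N; rewrite (leq_trans Nn) ?leq_addr.
Qed.

Lemma extract_increasing {Q : nat -> nat -> Prop} :
  (forall k N, exists n, (N <= n)%N /\ Q k n) ->
  exists phi : nat -> nat, (forall k, phi k < phi k.+1)%N /\ forall k, Q k (phi k).
Proof.
move=> ex; have [g gP] := choice (fun kN : nat * nat => ex kN.1 kN.2).
pose fix phi k := if k is k'.+1 then g (k, (phi k').+1) else g (0, 0)%N.
exists phi; split => [k|[|k]]; [exact: (gP (k.+1, _)).1 | exact: (gP (0, 0)%N).2 |].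
exact: (gP (k.+1, _)).2.
Qed.

Lemma unbounded_cofinal {l : nat -> nat} : (forall L, exists n, (L <= l n)%N) ->
  forall L N, exists n, (N <= n)%N /\ (L <= l n)%N.
Proof.
move=> unb L N; have [n ln] := unb (maxn L (\max_(j < N) l j).+1).
exists n; rewrite geq_max in ln; case/andP: ln => -> ln; split=> //.
rewrite leqNgt; apply/negP => nN.
by move: ln; rewrite ltnNge (leq_bigmax_cond (Ordinal nN)).
Qed.

Definition seed_set {R : realType} (r : R) : set (C2 R) :=
  [set z | 2 * normc (z.2 - 'i * z.1) < normc z.1 /\ 2 * r < normc z.1].

Section PingPong.
Local Open Scope complex_scope.
Context {R : realType} (P : {poly CC R}) (d : CC R) (t : R).
Hypotheses (d0 : d != 0) (sizeP : (2 < size P)%N).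
Hypotheses (cos_neq0 : cos t != 0) (sin_neq0 : sin t != 0).

Local Notation cosC := ((cos t)%:C : CC R).
Local Notation sinC := ((sin t)%:C : CC R).

(* In the coordinates [frame b] adapted to generator b, [henon_dir e]
   expands the coordinate [major e]: y for h1, x for h1^-1. *)
Definition frame (b : bool) (z : C2 R) := if b then Defs.rot t z else z.
Definition unframe (b : bool) (z : C2 R) := if b then rot_inv t z else z.
Definition henon_dir (e : bool) := if e then henon_inv P d else henon P d.

Lemma eval_letterE l : eval_letter P d t l =1 unframe l.1 \o henon_dir l.2 \o frame l.1.
Proof. by case: l => [[] []]. Qed.

Lemma frameK b : cancel (frame b) (unframe b).
Proof. by case: b => // z; rewrite /= rot_inv_rot. Qed.

Lemma unframeK b : cancel (unframe b) (frame b).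
Proof. by case: b => // z; rewrite /= rot_rot_inv. Qed.

Lemma frame_swap b b' z : b != b' ->
  frame b z = (if b then Defs.rot t else rot_inv t) (frame b' z).
Proof. by case: b; case: b' => //= _; rewrite rot_inv_rot. Qed.

Lemma normc_cos_le1 : normc cosC <= 1.
Proof. by rewrite normc_real cos_max. Qed.

Lemma normc_sin_le1 : normc sinC <= 1.
Proof. by rewrite normc_real sin_max. Qed.

Lemma normc_Nsin_le1 : normc (- sinC) <= 1.
Proof. by rewrite normcN normc_sin_le1. Qed.

Lemma norm2_frame b z : norm2 (frame b z) <= 2 * norm2 z.
Proof.
have := normc_fst_le_norm2 z; have := normc_snd_le_norm2 z; have := normc_ge0 z.1.
case: b => /=; last by rewrite /norm2; lra.
move=> *; apply: norm2_le => /=.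
  by rewrite -mulNr; have := normc_lin_le _ _ z.1 z.2 normc_cos_le1 normc_Nsin_le1; lra.
by have := normc_lin_le _ _ z.1 z.2 normc_sin_le1 normc_cos_le1; lra.
Qed.

Lemma norm2_unframe b z : norm2 (unframe b z) <= 2 * norm2 z.
Proof.
have := normc_fst_le_norm2 z; have := normc_snd_le_norm2 z; have := normc_ge0 z.1.
case: b => /=; last by rewrite /norm2; lra.
move=> *; apply: norm2_le => /=.
  by have := normc_lin_le _ _ z.1 z.2 normc_cos_le1 normc_sin_le1; lra.
by have := normc_lin_le _ _ z.1 z.2 normc_Nsin_le1 normc_cos_le1; lra.
Qed.

Definition kappa : R := Num.min `|cos t| `|sin t|.

(* [gamma] is chosen so that rotating a point of a target cone lands it in
   every domain cone of the other generator (see [normc_dominant_combination]),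
   and so that one letter at least doubles [norm2]. *)
Definition gamma : R := 16 / kappa.
Definition alpha : R := 4 / kappa.

Lemma kappa_gt0 : 0 < kappa.
Proof. by rewrite lt_min !normr_gt0 cos_neq0 sin_neq0. Qed.

Lemma kappa_le_cos : kappa <= normc cosC.
Proof. by rewrite normc_real ge_min lexx. Qed.

Lemma kappa_le_sin : kappa <= normc sinC.
Proof. by rewrite normc_real ge_min lexx orbT. Qed.

Lemma kappa_le1 : kappa <= 1.
Proof. exact: le_trans kappa_le_cos normc_cos_le1. Qed.

Lemma gamma_kappa : gamma * kappa = 16.
Proof. by rewrite mulfVK // gt_eqF // kappa_gt0. Qed.

Lemma alpha_kappa : alpha * kappa = 4.
Proof. by rewrite mulfVK // gt_eqF // kappa_gt0. Qed.

Lemma gamma_ge16 : 16 <= gamma.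
Proof. have := gamma_kappa; have := kappa_le1; have := kappa_gt0; nra. Qed.

Lemma alpha_ge4 : 4 <= alpha.
Proof. have := alpha_kappa; have := kappa_le1; have := kappa_gt0; nra. Qed.

Definition henon_cone_expansion (A G r : R) : Prop :=
  forall e w, normc (minor e w) <= A * normc (major e w) -> r <= normc (major e w) ->
  G * normc (major e w) <= normc (major e (henon_dir e w)) /\
  normc (minor e (henon_dir e w)) = normc (major e w).

Lemma henon_dir_expands (A G : R) : 0 <= A -> 0 <= G ->
  exists r : R, 1 <= r /\ henon_cone_expansion A G r.
Proof.
move=> A0 G0.
have [r [r1 Pbig]] :=
  horner_normc_superlinear _ sizeP (G + normc d * A + G * normc d + A).
have dn0 : 0 < normc d by rewrite normc_gt0.
exists r; split => // [[]] [x y] /= minor_le r_le; split => //.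
- rewrite normcM normcV ler_pdivlMr //.
  have := Pbig x r_le; have := lerB_normc P.[x] y.
  have := normc_ge0 x; have := normc_ge0 y; nra.
- have := Pbig y r_le; have := lerB_normc P.[y] (d * x).
  rewrite normcM.
  have y0 := normc_ge0 y.
  have : normc d * normc x <= normc d * (A * normc y) by rewrite ler_wpM2l // ltW.
  have : 0 <= G * normc d * normc y by rewrite !mulr_ge0 // ltW.
  have : 0 <= A * normc y by rewrite mulr_ge0.
  nra.
Qed.

Lemma frame_near_line b (x rho : CC R) (w := frame b (x, 'i * x + rho)) :
  (normc x - normc rho <= normc w.1 <= normc x + normc rho) /\
  (normc x - normc rho <= normc w.2 <= normc x + normc rho).
Proof.
have near u v : normc u = 1 -> normc v <= 1 ->
    normc x - normc rho <= normc (u * x + v * rho) <= normc x + normc rho.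
  exact: normc_unit_perturb.
rewrite {}/w; case: b => /=.
  have -> : cosC * x - sinC * ('i * x + rho) = (cosC - sinC * 'i) * x + (- sinC) * rho.
    by ring.
  have -> : sinC * x + cosC * ('i * x + rho) = (sinC + cosC * 'i) * x + cosC * rho.
    by ring.
  split; apply: near; rewrite ?normc_Nsin_le1 ?normc_cos_le1 //.
    by rewrite -mulNr -rmorphN normc_unit_circle // sqrrN cos2Dsin2.
  by rewrite normc_unit_circle // addrC cos2Dsin2.
split; first by have := normc_ge0 rho; move=> rho0; apply/andP; split; lra.
have n1 : normc (1 : CC R) <= 1 by rewrite normc1.
by have := near 'i 1 normc_i n1; rewrite mul1r.
Qed.

Section Cones.
Context {r : R}.
Hypothesis expands : henon_cone_expansion alpha gamma r.

Definition target (l : letter) (z : C2 R) : Prop :=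
  let w := frame l.1 z in
  gamma * normc (minor l.2 w) <= normc (major l.2 w) /\
  gamma * r <= normc (major l.2 w).

Definition domain (l : letter) (z : C2 R) : Prop :=
  let w := frame l.1 z in
  [/\ normc (minor l.2 w) <= alpha * normc (major l.2 w), r <= normc (major l.2 w)
    & kappa / 4 * norm2 z <= normc (major l.2 w)].

Lemma domain_letter l z : domain l z ->
  target l (eval_letter P d t l z) /\ 2 * norm2 z <= norm2 (eval_letter P d t l z).
Proof.
case=> minor_le r_le major_ge; rewrite /target eval_letterE /= unframeK.
set w := frame l.1 z in minor_le r_le major_ge *.
have [grow shift] := expands _ _ minor_le r_le.
have := gamma_ge16; have := gamma_kappa; have := kappa_gt0.
have := normc_ge0 (major l.2 w).
split; first by rewrite shift; split; nra.
have := norm2_frame l.1 (unframe l.1 (henon_dir l.2 w)); rewrite unframeK.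
have := normc_major_le_norm2 l.2 (henon_dir l.2 w).
have := norm2_ge0 z.
nra.
Qed.

Lemma target_domain_same l z : target l z -> domain l z.
Proof.
rewrite /target /domain; set w := frame l.1 z => -[minor_le r_le].
have := gamma_ge16; have := alpha_ge4; have := kappa_gt0; have := kappa_le1.
have := normc_ge0 (minor l.2 w); have := normc_ge0 (major l.2 w).
move=> M0 m0 k1 k0 A4 G16.
have w_le : norm2 w <= normc (major l.2 w) by apply: norm2_le_major; nra.
have := norm2_unframe l.1 w; rewrite /w frameK -/w.
split; nra.
Qed.

Lemma target_domain_cross l l' z : target l' z -> l.1 != l'.1 -> domain l z.
Proof.
rewrite /target /domain => -[minor_le r_le] ne.
set w := frame l'.1 z in minor_le r_le *.
have := gamma_ge16; have := kappa_gt0; have := kappa_le1.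
have := normc_ge0 (minor l'.2 w); have := normc_ge0 (major l'.2 w).
set m := normc (major l'.2 w) in minor_le r_le * => m0 minor0 k1 k0 G16.
have minor_small : 16 * normc (minor l'.2 w) <= kappa * m.
  have := ler_wpM2l (ltW kappa_gt0) minor_le.
  by rewrite mulrA [kappa * gamma]mulrC gamma_kappa.
have w_le : norm2 w <= m by apply: norm2_le_major; rewrite -/m; nra.
have := norm2_unframe l'.1 w; rewrite /w frameK -/w => z_le.
have coord a b : kappa <= normc a <= 1 -> kappa <= normc b <= 1 ->
    kappa / 2 * m <= normc (a * w.1 + b * w.2) <= 2 * m.
  by move=> ab ab'; apply: normc_comb_major.
have kNsin : kappa <= normc (- sinC) <= 1 by rewrite normcN kappa_le_sin normc_sin_le1.
have kcos : kappa <= normc cosC <= 1 by rewrite kappa_le_cos normc_cos_le1.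
have ksin : kappa <= normc sinC <= 1 by rewrite kappa_le_sin normc_sin_le1.
have [/andP[a1 a2] /andP[b1 b2]] : (kappa / 2 * m <= normc (frame l.1 z).1 <= 2 * m) /\
    (kappa / 2 * m <= normc (frame l.1 z).2 <= 2 * m).
  rewrite (frame_swap _ _ z ne) -/w; case: l.1 => /=; last by split; apply: coord.
  by rewrite -mulNr; split; apply: coord.
have [M1 M2 m1 m2] : [/\ kappa / 2 * m <= normc (major l.2 (frame l.1 z)),
    normc (major l.2 (frame l.1 z)) <= 2 * m,
    kappa / 2 * m <= normc (minor l.2 (frame l.1 z))
  & normc (minor l.2 (frame l.1 z)) <= 2 * m] by case: l.2.
have r_km : 16 * r <= kappa * m.
  by have := ler_wpM2l (ltW k0) r_le; rewrite mulrA [kappa * gamma]mulrC gamma_kappa.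
have alpha_M : 2 * m <= alpha * normc (major l.2 (frame l.1 z)).
  have alpha0 : 0 <= alpha by have := alpha_ge4; lra.
  by have := ler_wpM2l alpha0 M1; rewrite !mulrA alpha_kappa; lra.
split; [lra | nra | nra].
Qed.

Lemma seed_domain l z : seed_set r z -> domain l z.
Proof.
case: z => x y [/= near_line r_lt].
have -> : y = 'i * x + (y - 'i * x) by ring.
set rho := y - 'i * x in near_line *.
have [/andP[_ x_le] /andP[_ y_le]] := frame_near_line false x rho.
have [/andP[a1 a2] /andP[b1 b2]] := frame_near_line l.1 x rho.
set w := frame l.1 _ in a1 a2 b1 b2.
have [M1 M2 m2] : [/\ normc x - normc rho <= normc (major l.2 w),
    normc (major l.2 w) <= normc x + normc rho
  & normc (minor l.2 w) <= normc x + normc rho] by case: l.2.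
have z_le : norm2 (x, 'i * x + rho) <= normc x + normc rho by apply: norm2_le.
have := alpha_ge4; have := kappa_gt0; have := kappa_le1; have := normc_ge0 rho.
by move=> rho0 k1 k0 A4; split; rewrite -/w; nra.
Qed.

Definition head_target (w : seq letter) (u : C2 R) : Prop :=
  if w is l :: _ then target l u else True.

Lemma reduced_word_expands w z : sorted cancel_free w -> seed_set r z ->
  head_target w (eval_word P d t w z) /\
  2 ^+ size w * norm2 z <= norm2 (eval_word P d t w z).
Proof.
move=> + seed_z; elim: w => [|l w IH] /=; first by rewrite expr0 mul1r.
move=> red; have [tw nw] := IH (path_sorted red).
have dom : domain l (eval_word P d t w z).
  case: w red tw {IH nw} => [_ _|l' w red tw] /=; first exact: seed_domain.
  have [same|ne] := eqVneq l.1 l'.1; last exact: target_domain_cross tw ne.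
  have ll' : cancel_free l l' by case/andP: red.
  by rewrite (cancel_free_same_generator _ _ ll' same); apply: target_domain_same.
have [tl nl] := domain_letter _ _ dom; split=> //.
have := mulr_ge0 (exprn_ge0 (size w) (ler0n R 2)) (norm2_ge0 z).
by rewrite exprS -mulrA; lra.
Qed.

End Cones.

Lemma seed_escape : exists r : R, forall z w, seed_set r z ->
  (size (reduce w))%:R < norm2 (eval_word P d t w z).
Proof.
have [r [r1 expands]] : exists r : R, 1 <= r /\ henon_cone_expansion alpha gamma r.
  by apply: henon_dir_expands; [have := alpha_ge4 | have := gamma_ge16]; lra.
exists r => z w seed_z; rewrite -(eval_reduce _ _ _ d0).
have [_ grow] := reduced_word_expands expands _ _ (sorted_reduce w) seed_z.
have z1 : 1 <= norm2 z.
  by case: seed_z => _ r_lt; have := normc_fst_le_norm2 z; lra.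
have : (size (reduce w))%:R < 2 ^+ size (reduce w) :> R.
  by rewrite -natrX ltr_nat ltn_expl.
have : 2 ^+ size (reduce w) <= 2 ^+ size (reduce w) * norm2 z :> R.
  by rewrite ler_peMr ?exprn_ge0.
lra.
Qed.

End PingPong.

Lemma exists_natr_gt {R : realType} (M : R) : exists m : nat, M < m%:R.
Proof.
by exists (Num.bound `|M|); apply: le_lt_trans (ler_norm M) (archi_boundP _).
Qed.

Lemma open_of_normc_balls {R : realType} (U : set (C2 R)) :
  (forall z, U z -> exists2 e : R, 0 < e &
     forall w, normc (z.1 - w.1) < e -> normc (z.2 - w.2) < e -> U w) ->
  open U.
Proof.
move=> balls; rewrite openE => z /balls[e e0 ball_e].
apply/nbhs_ballP; exists (e%:C)%C; first by rewrite /= ltcR.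
by move=> w [/= w1 w2]; apply: ball_e; rewrite -ltcR -normcE_norm.
Qed.

Section SeedSet.
Local Open Scope complex_scope.
Context {R : realType}.
Variable r : R.

Lemma seed_set_open : open (seed_set r).
Proof.
apply: open_of_normc_balls => z [near_line r_lt].
set x := normc z.1 in near_line r_lt; set rho := normc (z.2 - 'i * z.1) in near_line.
exists (Num.min ((x - 2 * rho) / 6) ((x - 2 * r) / 2)).
  by rewrite lt_min !divr_gt0 //; lra.
move=> w; rewrite !lt_min => /andP[e11 e12] /andP[e21 _].
have w1 : x - normc (z.1 - w.1) <= normc w.1.
  by have := lerB_normc z.1 (z.1 - w.1); rewrite (_ : z.1 - (z.1 - w.1) = w.1) //; ring.
have w_line : normc (w.2 - 'i * w.1) <= rho + normc (z.2 - w.2) + normc (z.1 - w.1).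
  have -> : w.2 - 'i * w.1 = (z.2 - 'i * z.1) - (z.2 - w.2) + 'i * (z.1 - w.1) by ring.
  have := le_normcD ((z.2 - 'i * z.1) - (z.2 - w.2)) ('i * (z.1 - w.1)).
  have := ler_normcB (z.2 - 'i * z.1) (z.2 - w.2).
  by rewrite normcM normc_i mul1r -/rho; lra.
by split; lra.
Qed.

Lemma seed_set_unbounded : unbounded2 (seed_set r).
Proof.
move=> M; set a := `|M| + 2 * `|r| + 1.
have [a0 Ma ra] : [/\ 0 < a, M < a & 2 * r < a].
  have := ler_norm M; have := normr_ge0 M; have := ler_norm r; have := normr_ge0 r.
  by rewrite /a; split; lra.
have na : normc (a%:C : CC R) = a by rewrite normc_real gtr0_norm.
exists (a%:C, 'i * a%:C); split.
  change (2 * normc ('i * a%:C - 'i * a%:C) < normc (a%:C : CC R) /\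
          2 * r < normc (a%:C : CC R)).
  by rewrite subrr normc0 na; split; lra.
by have := normc_fst_le_norm2 (a%:C, 'i * a%:C); rewrite [_.1]/= na; lra.
Qed.

End SeedSet.

Lemma normal_on_escaping {R : realType} (P : {poly CC R}) (d : CC R) (t : R)
    (U : set (C2 R)) :
  d != 0 ->
  (forall z w, U z -> (size (reduce w))%:R < norm2 (eval_word P d t w z)) ->
  normal_on (Ggroup P d t) U.
Proof.
move=> d0 escape f inG; have [wf fE] := choice inG.
pose len n := size (reduce (wf n)).
have [unb|bnd] := EM (forall L, exists n, (L <= len n)%N).
  have [phi [phi_incr len_phi]] := extract_increasing (unbounded_cofinal unb).
  exists phi; split=> //; right=> K _ KU M.
  have [m Mm] := exists_natr_gt M.
  exists m => n mn z Kz; rewrite fE.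
  have : (m%:R : R) <= (len (phi n))%:R by rewrite ler_nat (leq_trans mn).
  by have := escape z (wf (phi n)) (KU z Kz); lra.
have [L lenL] : exists L, forall n, (len n < L)%N.
  apply: contrapT => /forallNP noL; apply: bnd => L.
  by have /existsNP[n /negP] := noL L; rewrite -leqNgt; exists n.
have [v recur] := recurrent_value (fun n => mem_words_upto (ltnW (lenL n))).
have [phi [phi_incr reduce_phi]] := extract_increasing (fun _ => recur).
exists phi; split=> //; left; exists (eval_word P d t v) => K _ _ e e0.
exists 0%N => n _ z _.
rewrite fE -(eval_reduce _ _ _ d0) reduce_phi /dist2 !subrr /norm2.
by rewrite normc0 maxxx.
Qed.

Lemma sin_neq0 {R : realType} (t : R) : 0 < t < 2 * pi -> t != pi -> sin t != 0.
Proof.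
move=> /andP[t0 t2pi] tpi; have pi0 : 0 < pi :> R := pi_gt0 R.
have [lt|gt|eq] := ltgtP t pi; last by rewrite eq eqxx in tpi.
  by rewrite gt_eqF // sin_gt0_pi // t0.
rewrite -[t](subrK pi) sinDpi oppr_eq0 gt_eqF // sin_gt0_pi //.
by apply/andP; split; lra.
Qed.

Lemma cos_neq0 {R : realType} (t : R) :
  0 < t < 2 * pi -> t != pi / 2 -> t != 3 * pi / 2 -> cos t != 0.
Proof.
move=> /andP[t0 t2pi] t1 t3; have pi0 : 0 < pi :> R := pi_gt0 R.
have [lt|gt|eq] := ltgtP t (pi / 2); last by rewrite eq eqxx in t1.
  by rewrite gt_eqF // cos_gt0_pihalf //; apply/andP; split; lra.
have [lt'|gt'|eq] := ltgtP t (3 * pi / 2); last by rewrite eq eqxx in t3.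
  have : 0 < sin (t - pi / 2) by apply: sin_gt0_pi; apply/andP; split; lra.
  by rewrite sinBpihalf oppr_gt0 => /lt_eqF ->.
rewrite -[t](subrK (pi *+ 2)) cosD2pi gt_eqF // cos_gt0_pihalf // -mulr_natl.
by apply/andP; split; lra.
Qed.

Theorem theoremA (R : realType) (P : {poly CC R}) (d : CC R) (t : R) :
  (2 < size P)%N ->
  d != 0 ->
  0 < t < 2 * pi ->
  t != pi / 2 -> t != pi -> t != 3 * pi / 2 ->
  exists U : set (C2 R),
    [/\ open U, U !=set0, unbounded2 U, U `<=` fatou_set (Ggroup P d t) &
      forall z : C2 R, U z ->
      forall om : nat -> letter,
        (forall m : nat, exists N : nat, forall k : nat, (N <= k)%N ->
           (m <= reduced_length (Sword om k))%N) ->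
        forall M : R, exists N : nat, forall k : nat, (N <= k)%N ->
           M < norm2 (Smap P d t om k z)].
Proof.
move=> sizeP d0 t_range t1 t2 t3.
have [r escape] :=
  seed_escape _ _ _ d0 sizeP (cos_neq0 t t_range t1 t3) (sin_neq0 t t_range t2).
have U_open := seed_set_open r.
exists (seed_set r); split=> //.
- by have [z [Uz _]] := seed_set_unbounded r 0; exists z.
- exact: seed_set_unbounded.
- move=> z Uz; exists (seed_set r); split=> //.
  exact: normal_on_escaping d0 escape.
- move=> z Uz om long M.
  have [m Mm] := exists_natr_gt M; have [N longN] := long m.
  exists N => k Nk; have := escape z (Sword om k) Uz.
  have : (m%:R : R) <= (reduced_length (Sword om k))%:R by rewrite ler_nat longN.
  by rewrite /Smap /reduced_length; lra.
Qed.
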